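(* Let $M(A)$ be an RBK manifold with Bott matrix $A$ and $P$-matrix $P$. Suppose $k$ is an even number and there are indices $i_1<\dots<i_{2k}$ such that the columns $A^{i_1}=A^{i_2}=\dots=A^{i_{2k}}$ are equal and nonzero, while all other columns of $A$ are zero. Then $w_2(M(A))=0$, so $M(A)$ has a Spin-structure.
   Context: Real Bott manifolds: let $A=[a_{ij}]$ be an $m\times m$ strictly upper triangular matrix with entries in $\{0,1\}$. For $i=1,\dots,m-1$ let $s_i$ be the Euclidean motion of $\mathbb R^m$ given by $s_i=(\mathrm{diag}[1,\dots,1,(-1)^{a_{i,i+1}},\dots,(-1)^{a_{i,m}}],\ \tfrac12 e_i)$, and $s_m=(I,\tfrac12 e_m)$. $\Gamma(A)=\langle s_1,\dots,s_m\rangle$ is a torsion-free crystallographic group with extension $0\to\mathbb Z^m\to\Gamma(A)\xrightarrow{\pi}\mathbb Z_2^m\to1$, and $M(A)=\mathbb R^m/\Gamma(A)$. Identify $H^*(\mathbb Z_2^m;\mathbb F_2)=\mathbb F_2[x_1,\dots,x_m]$ ($x_i$ dual to the image of $s_i$). The $P$-matrix $P=[p_{ij}]$ has $p_{ii}=1$, $p_{ij}=2$ if $i<j$ and $a_{ij}=1$, and $p_{ij}=0$ otherwise; with $\alpha(0)=0,\alpha(1)=\alpha(2)=1,\alpha(3)=0$, $\beta(0)=\beta(2)=0,\beta(1)=\beta(3)=1$, set $\alpha_j=\sum_i\alpha(p_{ij})x_i$, $\beta_j=\sum_i\beta(p_{ij})x_i$ (so $\alpha_j+\beta_j=\sum_{i<j}a_{ij}x_i$).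 The total Stiefel–Whitney class is $w(M(A))=\pi^*\big(\prod_{j=1}^m(1+\alpha_j+\beta_j)\big)$. An RBK manifold is $M(A)$ with $m=2n$ for which $\{1,\dots,2n\}$ can be partitioned into $n$ pairs $\{j_k,j_{k+n}\}$ with equal columns $A^{j_k}=A^{j_{k+n}}$ ($A^j$ = $j$-th column of $A$). $M(A)$ has a Spin-structure iff $w_2(M(A))=0$. *)

From HB Require Import structures.
From mathcomp Require Import all_boot all_order all_algebra all_fingroup.
Set Implicit Arguments. Unset Strict Implicit. Unset Printing Implicit Defensive.
Import GRing.Theory.
Local Open Scope ring_scope.

Definition strictly_upper (m : nat) (A : 'M['F_2]_m) : Prop :=
  forall i j : 'I_m, (j <= i)%N -> A i j = 0.

(* RBK manifold: m = n + n and the indices can be partitioned into n pairs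
   {j_k, j_(k+n)} with equal columns; the enumeration j is a permutation s. *)
Definition RBK (n : nat) (A : 'M['F_2]_(n + n)) : Prop :=
  strictly_upper A /\
  exists s : 'S_(n + n),
    forall k : 'I_n, col (s (lshift n k)) A = col (s (rshift n k)) A.

Definition Pmat (m : nat) (A : 'M['F_2]_m) (i j : 'I_m) : nat :=
  if i == j then 1%N else if (i < j)%N && (A i j == 1) then 2%N else 0%N.

Definition alphaF (p : nat) : 'F_2 :=
  match p with 1 | 2 => 1 | _ => 0 end.
Definition betaF (p : nat) : 'F_2 :=
  match p with 1 | 3 => 1 | _ => 0 end.

(* Linear forms in F_2[x_1..x_m] are represented by their coefficient rows:
   l represents sum_i l_i x_i. *)
Definition alpha_j (m : nat) (A : 'M['F_2]_m) (j : 'I_m) : 'rV['F_2]_m :=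
  \row_i alphaF (Pmat A i j).
Definition beta_j (m : nat) (A : 'M['F_2]_m) (j : 'I_m) : 'rV['F_2]_m :=
  \row_i betaF (Pmat A i j).

(* Homogeneous quadratic polynomials in F_2[x_1..x_m] are represented by
   coefficient matrices Q with Q i i' = coefficient of x_i x_i' for i <= i'
   and Q i i' = 0 for i > i'.  qmul l l' is the product of two linear forms. *)
Definition qmul (m : nat) (l l' : 'rV['F_2]_m) : 'M['F_2]_m :=
  \matrix_(i, i')
    if i == i' then l 0 i * l' 0 i
    else if (i < i')%N then l 0 i * l' 0 i' + l 0 i' * l' 0 i
    else 0.

(* Degree-2 homogeneous component of prod_j (1 + alpha_j + beta_j)
   = sum_{j < j'} (alpha_j + beta_j)(alpha_j' + beta_j'); its image under
   pi^* is w_2(M(A)). *)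
Definition w2poly (m : nat) (A : 'M['F_2]_m) : 'M['F_2]_m :=
  \sum_(j : 'I_m) \sum_(j' : 'I_m | (j < j')%N)
     qmul (alpha_j A j + beta_j A j) (alpha_j A j' + beta_j A j').

(** The columns of a Bott matrix are exactly the classes [alpha_j + beta_j].
    Under the hypothesis they take one value [c] on the [2k] chosen indices
    and vanish elsewhere, so [w_2] collapses to the square [c^2] counted once
    for each of the ['C(2k, 2) = k (2k - 1)] pairs of chosen indices; that
    count is even because [k] is, and [w_2 = 0] over [F_2]. *)

From mathcomp Require Import all_boot all_order all_algebra all_fingroup.

Set Implicit Arguments.
Unset Strict Implicit.
Unset Printing Implicit Defensive.
Import Order.TTheory GRing.Theory.
Local Open Scope ring_scope.

Lemma double_sum_ltn (m : nat) (f : 'I_m -> 'I_m -> nat) :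
    (forall i j, f i j = f j i) ->
  (\sum_i \sum_j f i j =
     (\sum_(i < m) \sum_(j < m | i < j) f i j).*2 + \sum_i f i i)%N.
Proof.
move=> fC.
have split_row (i : 'I_m) : (\sum_j f i j =
    \sum_(j < m | i < j) f i j + \sum_(j < m | j < i) f i j + f i i)%N.
  rewrite (bigID (fun j : 'I_m => (i < j)%N)) /= -addnA; congr (_ + _)%N.
  rewrite (bigID (fun j : 'I_m => (j < i)%N)) /=; congr (_ + _)%N.
    by apply: eq_bigl => j; case: ltngtP.
  by rewrite (big_pred1 i) // => j /=; rewrite -(inj_eq val_inj); case: ltngtP.
rewrite (eq_bigr _ (fun i _ => split_row i)) !big_split /= -addnn.
congr (_ + _ + _)%N; rewrite (exchange_big_dep xpredT) //=.
by apply: eq_bigr => i _; apply: eq_bigr => j _; rewrite fC.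
Qed.

Lemma card_ltn_pairs (m : nat) (P : pred 'I_m) :
  (\sum_(i < m) \sum_(j < m | i < j) (P i && P j : nat))%N = 'C(#|P|, 2).
Proof.
have cardP : #|P| = (\sum_i (P i : nat))%N.
  rewrite -sum1_card big_mkcond; apply: eq_bigr => i _.
  by rewrite unfold_in; case: (P i).
have := @double_sum_ltn m (fun i j => (P i && P j : nat))
  (fun i j => congr1 nat_of_bool (andbC _ _)).
have -> : (\sum_i \sum_j (P i && P j : nat) = #|P| * #|P|)%N.
  rewrite cardP big_distrl; apply: eq_bigr => i _ /=; rewrite big_distrr /=.
  by apply: eq_bigr => j _; case: (P i); case: (P j).
under [in X in (_ + X)%N]eq_bigr do rewrite andbb.
rewrite -cardP => sqP.
by rewrite bin2 -subn1 mulnBr muln1 sqP addnK doubleK.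
Qed.

Lemma bin2_double (k : nat) : 'C(k.*2, 2) = (k * (k.*2).-1)%N.
Proof. by rewrite bin2 -mul2n -mulnA mul2n doubleK. Qed.

Lemma mulrn_even_pchar2 (R : nzRingType) (V : lmodType R) (v : V) (n : nat) :
  2%N \in [pchar R] -> ~~ odd n -> v *+ n = 0.
Proof.
move=> R2 /negbTE n_even; rewrite -[n]odd_double_half n_even add0n -muln2.
by rewrite mulrnA -scaler_nat (pcharf0 R2) scale0r.
Qed.

Lemma addr_alpha_beta_j (m : nat) (A : 'M['F_2]_m) (j : 'I_m) :
  strictly_upper A -> alpha_j A j + beta_j A j = (col j A)^T.
Proof.
move=> A_upper; apply/matrixP => x i; rewrite !mxE /Pmat.
have [->|_] := eqVneq i j.
  by rewrite A_upper //= (addrr_pchar2 (pchar_Fp _)).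
case: ltnP => [_|le_ji] /=; last by rewrite A_upper //= addr0.
by case: (A i j) => [[|[|//]] ?]; rewrite addr0; apply/val_inj.
Qed.

Lemma qmul0l (m : nat) (l : 'rV['F_2]_m) : qmul 0 l = 0.
Proof.
by apply/matrixP => i j; rewrite !mxE; do 2?case: ifP; rewrite ?mul0r ?add0r.
Qed.

Lemma qmul0r (m : nat) (l : 'rV['F_2]_m) : qmul l 0 = 0.
Proof.
by apply/matrixP => i j; rewrite !mxE; do 2?case: ifP; rewrite ?mulr0 ?add0r.
Qed.

Lemma w2poly_const_cols (m : nat) (A : 'M['F_2]_m) (v : 'cV['F_2]_m)
    (P : pred 'I_m) :
    strictly_upper A -> (forall j, col j A = if P j then v else 0) ->
  w2poly A = qmul v^T v^T *+ 'C(#|P|, 2).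
Proof.
move=> A_upper colsA; rewrite -card_ltn_pairs /w2poly -sumrMnr.
apply: eq_bigr => i _; rewrite -sumrMnr; apply: eq_bigr => j _.
rewrite !addr_alpha_beta_j // !colsA.
by case: (P i); case: (P j); rewrite ?trmx0 ?qmul0l ?qmul0r.
Qed.

Theorem lemma3p2 (n : nat) (A : 'M['F_2]_(n + n)) (k : nat)
    (I : 'I_(k.*2) -> 'I_(n + n)) :
  RBK A ->
  ~~ odd k -> (0 < k)%N ->
  (forall t t' : 'I_(k.*2), (t < t')%N -> (I t < I t')%N) ->
  (forall t t' : 'I_(k.*2), col (I t) A = col (I t') A) ->
  (forall t : 'I_(k.*2), col (I t) A != 0) ->
  (forall j : 'I_(n + n), (forall t : 'I_(k.*2), j != I t) -> col j A = 0) ->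
  w2poly A = 0.
Proof.
move=> [A_upper _] k_even k_gt0 I_incr I_cols _ zero_cols.
have t0 : 'I_(k.*2) by exists 0%N; rewrite double_gt0.
have I_inj : injective I := inc_inj (le_mono (f := I) I_incr).
have colsA j : col j A = if j \in codom I then col (I t0) A else 0.
  case: codomP => [[t ->] | not_img]; first exact: I_cols.
  by apply: zero_cols => t; apply/eqP => j_eq; apply: not_img; exists t.
rewrite (w2poly_const_cols A_upper colsA) card_codom // card_ord bin2_double.
by rewrite mulrn_even_pchar2 ?pchar_Fp // oddM negb_and k_even.
Qed.
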